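(* Let $m_1,m_2,m_3>0$ and let $q_1,q_2,q_3$ be a choreographic solution of $$\ddot q_k=\sum_{j=1,\,j\neq k}^{3} m_j (q_j-q_k)\, f\!\left(\|q_j-q_k\|^2\right),\qquad k\in\{1,2,3\},$$ where $f:\mathbb{R}_{>0}\to\mathbb{R}_{>0}$ is positive and $\sqrt{x}\,f(x)$ is decreasing. If the curve along which the masses move has an axis of symmetry, then $m_1=m_2=m_3$.
   Context: A choreographic solution is one for which there exist a twice continuously differentiable periodic function $p$ and constants $h_1,h_2,h_3$ with $q_k(t)=p(t+h_k)$. The axis of symmetry hypothesis is understood, as in the paper, as: the curve lies in the plane and (after choice of coordinates and time origin) $p(-t)=\begin{pmatrix}1&0\\0&-1\end{pmatrix}p(t)$ for all $t$. The center of mass is assumed at the origin: $\sum_k m_k q_k=0$. *)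

From Stdlib Require Import Reals.
From Coquelicot Require Import Coquelicot.
Open Scope R_scope.

Definition vadd (x y : R * R) : R * R := (fst x + fst y, snd x + snd y).
Definition vsub (x y : R * R) : R * R := (fst x - fst y, snd x - snd y).
Definition vscale (a : R) (x : R * R) : R * R := (a * fst x, a * snd x).
Definition vdot (x y : R * R) : R := fst x * fst y + snd x * snd y.
Definition vnorm2 (x : R * R) : R := vdot x x.

Definition C2 (g : R -> R) : Prop :=
  exists dg ddg : R -> R,
    (forall t, is_derive g t (dg t)) /\
    (forall t, is_derive dg t (ddg t)) /\
    (forall t, continuous ddg t).

Definition C2v (p : R -> R * R) : Prop :=
  C2 (fun t => fst (p t)) /\ C2 (fun t => snd (p t)).

Definition acc (q : R -> R * R) (t : R) : R * R :=
  (Derive_n (fun s => fst (q s)) 2 t, Derive_n (fun s => snd (q s)) 2 t).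

(* Bodies are indexed by 0,1,2. Term j of the force acting on body k:
   m_j (q_j - q_k) f(|q_j - q_k|^2), and 0 when j = k. *)
Definition force_term (f : R -> R) (m : nat -> R) (q : nat -> R -> R * R)
    (j k : nat) (t : R) : R * R :=
  if Nat.eqb j k then (0, 0)
  else vscale (m j * f (vnorm2 (vsub (q j t) (q k t)))) (vsub (q j t) (q k t)).

Definition rhs (f : R -> R) (m : nat -> R) (q : nat -> R -> R * R)
    (k : nat) (t : R) : R * R :=
  vadd (force_term f m q 0 k t)
       (vadd (force_term f m q 1 k t) (force_term f m q 2 k t)).

Definition is_solution (f : R -> R) (m : nat -> R) (q : nat -> R -> R * R) : Prop :=
  (forall j k t, (j < 3)%nat -> (k < 3)%nat -> j <> k -> q j t <> q k t) /\
  (forall k, (k < 3)%nat -> C2v (q k)) /\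
  (forall k t, (k < 3)%nat -> acc (q k) t = rhs f m q k t).

Definition center_of_mass_zero (m : nat -> R) (q : nat -> R -> R * R) : Prop :=
  forall t, vadd (vscale (m 0%nat) (q 0%nat t))
             (vadd (vscale (m 1%nat) (q 1%nat t)) (vscale (m 2%nat) (q 2%nat t)))
           = (0, 0).

Definition choreography_curve (q : nat -> R -> R * R) (p : R -> R * R) : Prop :=
  C2v p /\ (exists T, 0 < T /\ forall t, p (t + T) = p t) /\
  exists h : nat -> R, forall k t, (k < 3)%nat -> q k t = p (t + h k).

Definition reflect_line (c : R * R) (th : R) (x : R * R) : R * R :=
  let u := (cos th, sin th) in
  vadd c (vsub (vscale (2 * vdot (vsub x c) u) u) (vsub x c)).

(* Axis of symmetry: in suitable coordinates (a line = the x-axis) and time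
   origin s, p(-t) = diag(1,-1) p(t). *)
Definition has_symmetry_axis (p : R -> R * R) : Prop :=
  exists (c : R * R) (th s : R),
    forall t, p (s - t) = reflect_line c th (p (s + t)).

From Stdlib Require Import Reals Lra Lia ZArith Classical.
From Coquelicot Require Import Coquelicot.
Open Scope R_scope.

(* Let [p] be the curve, so that [q_k(t) = p(t + h_k)].  Reflecting in the axis and
   reversing time turns the choreography into one with phase shifts [-h_k]; hence at
   every point [p u] the six chords [p (u + h_j - h_k) - p u] satisfy the centre-of-mass
   relations and the equations of motion both for [h] and for [-h].  Solving this
   linear system and using that each pairwise force is parallel to its chord gives
   [p x p'' = 0] unless all masses are equal: every body feels a central force.  Zero
   torque on two bodies then makes the triangle equilateral whenever it is not
   collinear.  If it is never collinear, [M^2 |q_k|^2] is proportional to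
   [m_i^2 + m_j^2 + m_i m_j], and comparing the periodic function [|p|^2] at the three
   phases forces equal masses.  Otherwise the triangle is always collinear (it cannot
   be both), the curve avoids the origin, and the conserved angular momentum [p x p']
   gives a contradiction: if it is nonzero, two bodies on a common line through the
   origin with equal momenta coincide up to sign; if it is zero, the curve stays on one
   ray from the origin, which is incompatible with the centre of mass at the origin. *)

Ltac ex_derive_hyps := repeat match goal with
  | |- _ /\ _ => split
  | |- True => exact I
  | H : forall t, is_derive ?g t _ |- ex_derive ?g _ => eexists; apply H
  end.

Ltac rewrite_derive_hyps := repeat match goal with
  | H : forall t, is_derive _ t _ |- _ => rewrite (is_derive_unique _ _ _ (H _))
  end.

(** * Real analysis *)

Lemma continuity_of_ex_derive (g : R -> R) : (forall t, ex_derive g t) -> continuity g.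
Proof.
  intros Hg t. apply continuity_pt_filterlim, (ex_derive_continuous g), Hg.
Qed.

Lemma is_derive_zero_const (g : R -> R) :
  (forall t, is_derive g t 0) -> forall a b, g a = g b.
Proof.
  intros Hg a b.
  destruct (MVT_gen g a b (fun _ => 0)) as [c [_ Hc]].
  - intros x _. apply Hg.
  - intros x _. apply continuity_of_ex_derive. intro t. exists 0. apply Hg.
  - lra.
Qed.

Lemma is_derive_ext_eq (g1 g2 : R -> R) (x l1 l2 : R) :
  (forall t, g1 t = g2 t) -> is_derive g1 x l1 -> is_derive g2 x l2 -> l1 = l2.
Proof.
  intros E H1 H2.
  rewrite <- (is_derive_unique _ _ _ H1), <- (is_derive_unique _ _ _ H2).
  apply Derive_ext, E.
Qed.

Lemma IVT_unordered (g : R -> R) (a b : R) :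
  continuity g -> g a < 0 -> 0 < g b -> exists z, g z = 0.
Proof.
  intros Hg Ha Hb.
  destruct (Rle_lt_dec a b) as [Hab | Hba].
  - destruct (IVT_cor g a b Hg Hab ltac:(nra)) as [z [_ Hz]]. eauto.
  - destruct (IVT_cor g b a Hg (Rlt_le _ _ Hba) ltac:(nra)) as [z [_ Hz]]. eauto.
Qed.

Lemma continuity_pos_everywhere (g : R -> R) (a : R) :
  continuity g -> (forall t, g t <> 0) -> 0 < g a -> forall b, 0 < g b.
Proof.
  intros Hg Hnz Ha b.
  destruct (Rtotal_order (g b) 0) as [Hb | [Hb | Hb]];
    [exfalso | exfalso; exact (Hnz b Hb) | exact Hb].
  destruct (IVT_unordered g b a Hg Hb Ha) as [z Hz]. exact (Hnz z Hz).
Qed.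

Lemma zero_everywhere_of_exclusive (g k : R -> R) (t0 : R) :
  continuity g -> continuity k ->
  (forall t, g t = 0 \/ k t = 0) -> (forall t, g t = 0 -> k t <> 0) ->
  g t0 = 0 -> forall t, g t = 0.
Proof.
  intros Hg Hk Hor Hex H0 t.
  destruct (Req_dec (g t) 0) as [Ht | Ht]; [exact Ht | exfalso].
  destruct (IVT_unordered (fun t => g t * g t - k t * k t) t0 t) as [z Hz].
  - apply continuity_minus; apply continuity_mult; assumption.
  - rewrite H0. pose proof (Rsqr_pos_lt _ (Hex t0 H0)). unfold Rsqr in *. lra.
  - destruct (Hor t) as [Hgt | Hkt]; [contradiction |].
    rewrite Hkt. pose proof (Rsqr_pos_lt _ Ht). unfold Rsqr in *. lra.
  - destruct (Hor z) as [Hgz | Hkz].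
    + apply (Hex z Hgz). rewrite Hgz in Hz. nra.
    + rewrite Hkz in Hz. apply (Hex z); [nra | exact Hkz].
Qed.

Lemma periodic_shift_nat (g : R -> R) (T : R) :
  (forall t, g (t + T) = g t) -> forall n t, g (t + INR n * T) = g t.
Proof.
  intros Hg n. induction n as [| n IH]; intro t.
  - f_equal. simpl. ring.
  - rewrite S_INR, <- (IH t), <- (Hg (t + INR n * T)). f_equal. ring.
Qed.

Lemma periodic_shift_int (g : R -> R) (T : R) :
  (forall t, g (t + T) = g t) -> forall k t, g (t + IZR k * T) = g t.
Proof.
  intros Hg k t. destruct (Z_le_gt_dec 0 k) as [Hk | Hk].
  - rewrite <- (Z2Nat.id k Hk), <- INR_IZR_INZ. apply periodic_shift_nat, Hg.
  - set (n := Z.to_nat (- k)).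
    replace k with (- Z.of_nat n)%Z by (unfold n; lia).
    rewrite opp_IZR, <- INR_IZR_INZ, <- (periodic_shift_nat g T Hg n).
    f_equal. ring.
Qed.

Lemma periodic_attains_max (g : R -> R) (T : R) :
  continuity g -> 0 < T -> (forall t, g (t + T) = g t) ->
  exists tm, forall t, g t <= g tm.
Proof.
  intros Hg HT Hper.
  destruct (continuity_ab_maj g 0 T) as [tm [Hmax _]]; [lra | intros; apply Hg |].
  exists tm. intro t.
  destruct (Zfloor_bound (t / T)) as [Hk1 Hk2].
  rewrite <- (periodic_shift_int g T Hper (- Zfloor (t / T)) t), opp_IZR.
  apply Hmax.
  assert (Ht : t = t / T * T) by (field; lra).
  split; nra.
Qed.

Lemma periodic_scaling_eq (g : R -> R) (T b0 b1 d0 d1 : R) :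
  continuity g -> 0 < T -> (forall t, g (t + T) = g t) -> (forall t, 0 < g t) ->
  0 < b0 -> 0 < b1 -> (forall t, b0 * g (t + d0) = b1 * g (t + d1)) -> b0 = b1.
Proof.
  intros Hg HT Hper Hpos Hb0 Hb1 Hrel.
  destruct (periodic_attains_max g T Hg HT Hper) as [tm Hmax].
  destruct (Rtotal_order b0 b1) as [Hlt | [Heq | Hgt]]; [exfalso | exact Heq | exfalso].
  - pose proof (Hrel (tm - d1)) as E. replace (tm - d1 + d1) with tm in E by ring.
    pose proof (Hmax (tm - d1 + d0)). pose proof (Hpos tm). pose proof (Hpos (tm - d1 + d0)).
    nra.
  - pose proof (Hrel (tm - d0)) as E. replace (tm - d0 + d0) with tm in E by ring.
    pose proof (Hmax (tm - d0 + d1)). pose proof (Hpos tm). pose proof (Hpos (tm - d0 + d1)).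
    nra.
Qed.

Lemma is_derive_reflected_time (x y u dx dy du : R -> R) (s c0 cx cy : R) :
  (forall t, is_derive x t (dx t)) -> (forall t, is_derive y t (dy t)) ->
  (forall t, is_derive u t (du t)) ->
  (forall t, u (2 * s - t) = c0 + cx * x t + cy * y t) ->
  forall t, - du (2 * s - t) = cx * dx t + cy * dy t.
Proof.
  intros Dx Dy Du E t.
  apply (is_derive_ext_eq (fun t => u (2 * s - t)) (fun t => c0 + cx * x t + cy * y t) t);
    [exact E | |]; auto_derive; ex_derive_hyps; rewrite_derive_hyps; unfold Rminus; ring.
Qed.

(** * Plane vectors and reflections *)

Definition cross (x y : R * R) : R := fst x * snd y - snd x * fst y.

Definition curve (x y : R -> R) (t : R) : R * R := (x t, y t).

Definition force (f : R -> R) (d : R * R) : R * R := vscale (f (vnorm2 d)) d.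

Definition accel_from (f : R -> R) (m1 : R) (x1 : R * R) (m2 : R) (x2 : R * R)
    (x : R * R) : R * R :=
  vadd (vscale m1 (force f (vsub x1 x))) (vscale m2 (force f (vsub x2 x))).

Definition reflect_lin (th : R) (x : R * R) : R * R :=
  vsub (vscale (2 * vdot x (cos th, sin th)) (cos th, sin th)) x.

Ltac vec_unfold :=
  unfold accel_from, force, reflect_line, reflect_lin, cross, curve,
    vnorm2, vdot, vadd, vsub, vscale; simpl.

Ltac vec_unfold_all :=
  unfold accel_from, force, reflect_line, reflect_lin, cross, curve,
    vnorm2, vdot, vadd, vsub, vscale in *; simpl in *.

Ltac vec_ring := apply injective_projections; vec_unfold; ring.

Ltac vec_lra :=
  apply injective_projections; vec_unfold_all;
  repeat match goal with H : (_, _) = (_, _) |- _ => apply pair_equal_spec in H as [? ?] end;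
  lra.

Lemma cross_scale (a b : R) (x y : R * R) :
  cross (vscale a x) (vscale b y) = a * b * cross x y.
Proof. vec_unfold. ring. Qed.

Lemma cross_force (f : R -> R) (x : R * R) : cross x (force f x) = 0.
Proof. vec_unfold. ring. Qed.

Lemma cross_add_sub (x x' y y' : R * R) :
  cross (vadd x x') (vadd y y') + cross (vsub x x') (vsub y y') = 2 * (cross x y + cross x' y').
Proof. vec_unfold. ring. Qed.

Lemma vdot_cross_sqr (x y : R * R) :
  vdot x y * vdot x y + cross x y * cross x y = vnorm2 x * vnorm2 y.
Proof. vec_unfold. ring. Qed.

Lemma vnorm2_sub_comm (x y : R * R) : vnorm2 (vsub x y) = vnorm2 (vsub y x).
Proof. vec_unfold. ring. Qed.

Lemma vnorm2_scale (a : R) (x : R * R) : vnorm2 (vscale a x) = a ^ 2 * vnorm2 x.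
Proof. vec_unfold. ring. Qed.

Lemma vnorm2_pos (x : R * R) : x <> (0, 0) -> 0 < vnorm2 x.
Proof.
  destruct x as [x1 x2]. intro Hx. vec_unfold.
  destruct (Req_dec x1 0) as [-> | H1].
  - destruct (Req_dec x2 0) as [-> | H2]; [contradiction |].
    pose proof (Rsqr_pos_lt _ H2). unfold Rsqr in *. lra.
  - pose proof (Rsqr_pos_lt _ H1). pose proof (Rle_0_sqr x2). unfold Rsqr in *. lra.
Qed.

Lemma vsub_neq_0 (x y : R * R) : x <> y -> vsub x y <> (0, 0).
Proof.
  intros Hxy H. apply Hxy.
  destruct x, y. vec_unfold_all. apply pair_equal_spec in H as [? ?]. f_equal; lra.
Qed.

Lemma vnorm2_sub_pos (x y : R * R) : x <> y -> 0 < vnorm2 (vsub x y).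
Proof. intro Hxy. apply vnorm2_pos, vsub_neq_0, Hxy. Qed.

Lemma vdot_neq0_of_parallel (x y : R * R) :
  x <> (0, 0) -> y <> (0, 0) -> cross x y = 0 -> vdot x y <> 0.
Proof.
  intros Hx Hy Hc Hd. pose proof (vdot_cross_sqr x y) as E.
  rewrite Hc, Hd in E. pose proof (vnorm2_pos x Hx). pose proof (vnorm2_pos y Hy). nra.
Qed.

Lemma parallel_scale (x y : R * R) :
  x <> (0, 0) -> cross x y = 0 -> y = vscale (vdot x y / vnorm2 x) x.
Proof.
  intros Hx Hc. pose proof (vnorm2_pos x Hx) as Hn.
  destruct x as [x1 x2], y as [y1 y2]. vec_unfold_all. f_equal.
  - transitivity ((x1 * (x1 * y1 + x2 * y2) - x2 * (x1 * y2 - x2 * y1)) / (x1 * x1 + x2 * x2));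
      [field | rewrite Hc; field]; lra.
  - transitivity ((x2 * (x1 * y1 + x2 * y2) + x1 * (x1 * y2 - x2 * y1)) / (x1 * x1 + x2 * x2));
      [field | rewrite Hc; field]; lra.
Qed.

(* [cross x' y + cross x y' = 0] is the derivative of [cross x y = 0]. *)
Lemma parallel_same_momentum (x x' y y' : R * R) (L : R) :
  x <> (0, 0) -> cross x y = 0 -> cross x' y + cross x y' = 0 ->
  cross x x' = L -> cross y y' = L -> L <> 0 -> y = x \/ y = vscale (-1) x.
Proof.
  intros Hx Hc Hd HLx HLy HL.
  set (k := vdot x y / vnorm2 x).
  assert (Hy : y = vscale k x) by (apply parallel_scale; assumption).
  rewrite Hy in Hd, HLy.
  assert (E : k * k * cross x x' = cross (vscale k x) y').
  { replace (cross (vscale k x) y')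
      with (k * (cross x' (vscale k x) + cross x y') - k * cross x' (vscale k x))
      by (vec_unfold; ring).
    rewrite Hd. vec_unfold. ring. }
  rewrite HLx, HLy in E.
  assert (Hk : (k - 1) * (k + 1) * L = 0).
  { replace ((k - 1) * (k + 1) * L) with (k * k * L - L) by ring. lra. }
  apply Rmult_integral in Hk as [Hk | Hk]; [| contradiction].
  apply Rmult_integral in Hk as [Hk | Hk]; [left | right]; rewrite Hy.
  - replace k with 1 by lra. vec_ring.
  - replace k with (-1) by lra. reflexivity.
Qed.

Lemma opposite_vdot_neg (a b : R) (x y : R * R) :
  0 < a -> 0 < b -> vadd (vscale a x) (vscale b y) = (0, 0) -> y <> (0, 0) -> vdot x y < 0.
Proof.
  intros Ha Hb H Hy. pose proof (vnorm2_pos y Hy) as Hn.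
  assert (E : a * vdot x y = - b * vnorm2 y).
  { destruct x as [x1 x2], y as [y1 y2]. vec_unfold_all.
    apply pair_equal_spec in H as [H1 H2].
    replace (a * (x1 * y1 + x2 * y2)) with ((a * x1) * y1 + (a * x2) * y2) by ring.
    replace (a * x1) with (- (b * y1)) by lra. replace (a * x2) with (- (b * y2)) by lra. ring. }
  nra.
Qed.

Lemma cos_sin_unit (th : R) : cos th * cos th + sin th * sin th = 1.
Proof. pose proof (sin2_cos2 th). unfold Rsqr in *. lra. Qed.

Lemma reflect_lin_involutive (th : R) (x : R * R) : reflect_lin th (reflect_lin th x) = x.
Proof.
  pose proof (cos_sin_unit th) as E.
  apply injective_projections; vec_unfold; set (C := cos th) in *; set (S := sin th) in *.
  - transitivity (fst x + (C * C + S * S - 1) * (4 * C * C * fst x + 4 * C * S * snd x));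
      [ring | rewrite E; ring].
  - transitivity (snd x + (C * C + S * S - 1) * (4 * C * S * fst x + 4 * S * S * snd x));
      [ring | rewrite E; ring].
Qed.

Lemma reflect_lin_inj (th : R) (x y : R * R) : reflect_lin th x = reflect_lin th y -> x = y.
Proof.
  intro H. rewrite <- (reflect_lin_involutive th x), <- (reflect_lin_involutive th y), H.
  reflexivity.
Qed.

Lemma vnorm2_reflect_lin (th : R) (x : R * R) : vnorm2 (reflect_lin th x) = vnorm2 x.
Proof.
  pose proof (cos_sin_unit th) as E. vec_unfold.
  set (C := cos th) in *; set (S := sin th) in *.
  transitivity (fst x * fst x + snd x * snd x
    + 4 * (C * C + S * S - 1) * (C * fst x + S * snd x) ^ 2); [ring | rewrite E; ring].
Qed.

Lemma reflect_line_sub (c : R * R) (th : R) (x y : R * R) :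
  vsub (reflect_line c th x) (reflect_line c th y) = reflect_lin th (vsub x y).
Proof. vec_ring. Qed.

Lemma force_reflect_lin (f : R -> R) (th : R) (d : R * R) :
  force f (reflect_lin th d) = reflect_lin th (force f d).
Proof.
  unfold force. rewrite vnorm2_reflect_lin.
  generalize (f (vnorm2 d)). intro w. vec_ring.
Qed.

Lemma accel_from_reflect_line (f : R -> R) (c : R * R) (th m1 m2 : R) (x1 x2 x : R * R) :
  accel_from f m1 (reflect_line c th x1) m2 (reflect_line c th x2) (reflect_line c th x) =
  reflect_lin th (accel_from f m1 x1 m2 x2 x).
Proof.
  unfold accel_from. rewrite !reflect_line_sub, !force_reflect_lin.
  generalize (force f (vsub x1 x)) (force f (vsub x2 x)). intros F1 F2. vec_ring.
Qed.

Lemma com_reflect_line (c : R * R) (th m0 m1 m2 : R) (x0 x1 x2 : R * R) :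
  vadd (vscale m0 (reflect_line c th x0))
    (vadd (vscale m1 (reflect_line c th x1)) (vscale m2 (reflect_line c th x2))) = (0, 0) ->
  vadd (vscale m0 x0) (vadd (vscale m1 x1) (vscale m2 x2)) =
  vsub (vscale (m0 + m1 + m2) c) (reflect_lin th (vscale (m0 + m1 + m2) c)).
Proof.
  set (X := vadd (vscale m0 x0) (vadd (vscale m1 x1) (vscale m2 x2))).
  set (Mc := vscale (m0 + m1 + m2) c).
  intro H.
  assert (HY : vsub X Mc = reflect_lin th (vsub (0, 0) Mc)).
  { rewrite <- H, <- (reflect_lin_involutive th (vsub X Mc)) at 1.
    f_equal. unfold X, Mc. vec_ring. }
  replace X with (vadd (vsub X Mc) Mc) by vec_ring.
  rewrite HY. vec_ring.
Qed.

(** * Three-body algebra *)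

Lemma pair_balance_solve (m0 m1 m2 z k d10 d01 d20 d02 d21 d12 : R) :
  0 < m0 -> 0 < m1 -> 0 < m2 ->
  m1 * d10 + m2 * d20 = z -> m0 * d01 + m2 * d21 = z -> m0 * d02 + m1 * d12 = z ->
  m1 * d01 + m2 * d02 = z + k -> m0 * d10 + m2 * d12 = z + k -> m0 * d20 + m1 * d21 = z + k ->
  k = 0 /\
  m0 * m1 * (d10 + d01) = (m0 + m1 - m2) * z /\
  m0 * m2 * (d20 + d02) = (m0 + m2 - m1) * z /\
  m1 * m2 * (d21 + d12) = (m1 + m2 - m0) * z /\
  m2 * (d20 - d02) = - m1 * (d10 - d01) /\
  m2 * (d21 - d12) = m0 * (d10 - d01).
Proof.
  intros H0 H1 H2 R0 R1 R2 R0' R1' R2'.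
  assert (Hk : k = 0).
  { assert (E : (m0 + m1 + m2) * k =
      m0 * ((m1 * d01 + m2 * d02) - (m1 * d10 + m2 * d20))
      + m1 * ((m0 * d10 + m2 * d12) - (m0 * d01 + m2 * d21))
      + m2 * ((m0 * d20 + m1 * d21) - (m0 * d02 + m1 * d12))).
    { rewrite R0, R1, R2, R0', R1', R2'. ring. }
    assert (E' : (m0 + m1 + m2) * k = 0) by (rewrite E; ring).
    apply Rmult_integral in E' as [E' | E']; lra. }
  subst k. rewrite Rplus_0_r in R0', R1', R2'.
  repeat split; try lra.
  - apply (Rmult_eq_reg_l 2); [| lra].
    transitivity (m0 * ((m1 * d10 + m2 * d20) + (m1 * d01 + m2 * d02))
      + m1 * ((m0 * d01 + m2 * d21) + (m0 * d10 + m2 * d12))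
      - m2 * ((m0 * d02 + m1 * d12) + (m0 * d20 + m1 * d21))); [ring |].
    rewrite R0, R1, R2, R0', R1', R2'. ring.
  - apply (Rmult_eq_reg_l 2); [| lra].
    transitivity (m0 * ((m1 * d10 + m2 * d20) + (m1 * d01 + m2 * d02))
      - m1 * ((m0 * d01 + m2 * d21) + (m0 * d10 + m2 * d12))
      + m2 * ((m0 * d02 + m1 * d12) + (m0 * d20 + m1 * d21))); [ring |].
    rewrite R0, R1, R2, R0', R1', R2'. ring.
  - apply (Rmult_eq_reg_l 2); [| lra].
    transitivity (- m0 * ((m1 * d10 + m2 * d20) + (m1 * d01 + m2 * d02))
      + m1 * ((m0 * d01 + m2 * d21) + (m0 * d10 + m2 * d12))
      + m2 * ((m0 * d02 + m1 * d12) + (m0 * d20 + m1 * d21))); [ring |].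
    rewrite R0, R1, R2, R0', R1', R2'. ring.
Qed.

(* [djk] is the displacement of body [j] as seen from body [k]; the last three
   rows are the first three with every displacement reversed. *)
Definition pair_system (m0 m1 m2 : R) (Z K d10 d01 d20 d02 d21 d12 : R * R) : Prop :=
  vadd (vscale m1 d10) (vscale m2 d20) = Z /\
  vadd (vscale m0 d01) (vscale m2 d21) = Z /\
  vadd (vscale m0 d02) (vscale m1 d12) = Z /\
  vadd (vscale m1 d01) (vscale m2 d02) = vadd Z K /\
  vadd (vscale m0 d10) (vscale m2 d12) = vadd Z K /\
  vadd (vscale m0 d20) (vscale m1 d21) = vadd Z K.

Lemma pair_system_solve (m0 m1 m2 : R) (Z K d10 d01 d20 d02 d21 d12 : R * R) :
  0 < m0 -> 0 < m1 -> 0 < m2 -> pair_system m0 m1 m2 Z K d10 d01 d20 d02 d21 d12 ->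
  K = (0, 0) /\
  vscale (m0 * m1) (vadd d10 d01) = vscale (m0 + m1 - m2) Z /\
  vscale (m0 * m2) (vadd d20 d02) = vscale (m0 + m2 - m1) Z /\
  vscale (m1 * m2) (vadd d21 d12) = vscale (m1 + m2 - m0) Z /\
  vscale m2 (vsub d20 d02) = vscale (- m1) (vsub d10 d01) /\
  vscale m2 (vsub d21 d12) = vscale m0 (vsub d10 d01).
Proof.
  intros H0 H1 H2 (R0 & R1 & R2 & R0' & R1' & R2').
  destruct (pair_balance_solve m0 m1 m2 (fst Z) (fst K) (fst d10) (fst d01) (fst d20) (fst d02)
    (fst d21) (fst d12) H0 H1 H2 (f_equal fst R0) (f_equal fst R1) (f_equal fst R2)
    (f_equal fst R0') (f_equal fst R1') (f_equal fst R2')) as (Kx & Ax & Bx & Cx & Dx & Ex).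
  destruct (pair_balance_solve m0 m1 m2 (snd Z) (snd K) (snd d10) (snd d01) (snd d20) (snd d02)
    (snd d21) (snd d12) H0 H1 H2 (f_equal snd R0) (f_equal snd R1) (f_equal snd R2)
    (f_equal snd R0') (f_equal snd R1') (f_equal snd R2')) as (Ky & Ay & By & Cy & Dy & Ey).
  repeat split; apply injective_projections; assumption.
Qed.

(* For parallel pairs, [(d + d') x (e + e') = - (d - d') x (e - e')]: the symmetric
   parts are multiples of [Z] and [W], the antisymmetric parts are proportional. *)
Lemma pair_system_cross (m0 m1 m2 : R)
    (Z K W L d10 d01 d20 d02 d21 d12 e10 e01 e20 e02 e21 e12 : R * R) :
  0 < m0 -> 0 < m1 -> 0 < m2 -> ~ (m0 = m1 /\ m1 = m2) ->
  pair_system m0 m1 m2 Z K d10 d01 d20 d02 d21 d12 ->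
  pair_system m0 m1 m2 W L e10 e01 e20 e02 e21 e12 ->
  cross d10 e10 = 0 -> cross d01 e01 = 0 -> cross d20 e20 = 0 ->
  cross d02 e02 = 0 -> cross d21 e21 = 0 -> cross d12 e12 = 0 ->
  cross Z W = 0.
Proof.
  intros H0 H1 H2 Hne HZ HW P10 P01 P20 P02 P21 P12.
  destruct (pair_system_solve _ _ _ _ _ _ _ _ _ _ _ H0 H1 H2 HZ) as (_ & Sa & Sb & Sc & Ab & Ac).
  destruct (pair_system_solve _ _ _ _ _ _ _ _ _ _ _ H0 H1 H2 HW) as (_ & Ta & Tb & Tc & Bb & Bc).
  assert (Hsym : forall d d' e e', cross d e = 0 -> cross d' e' = 0 ->
    cross (vadd d d') (vadd e e') = - cross (vsub d d') (vsub e e')).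
  { intros d d' e e' Hd Hd'. pose proof (cross_add_sub d d' e e'). lra. }
  assert (Hscale : forall k k' x y x' y', vscale k x = vscale k' x' -> vscale k y = vscale k' y' ->
    k * k * cross x y = k' * k' * cross x' y').
  { intros k k' x y x' y' Hx Hy. rewrite <- !cross_scale, Hx, Hy. reflexivity. }
  pose proof (Hscale _ _ _ _ _ _ Sa Ta) as Ea. pose proof (Hscale _ _ _ _ _ _ Sb Tb) as Eb.
  pose proof (Hscale _ _ _ _ _ _ Sc Tc) as Ec. pose proof (Hscale _ _ _ _ _ _ Ab Bb) as Eab.
  pose proof (Hscale _ _ _ _ _ _ Ac Bc) as Eac.
  rewrite Hsym in Ea, Eb, Ec by assumption.
  set (X := cross Z W) in *.
  assert (F1 : 4 * m0 * (m2 - m1) * X = 0).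
  { replace (4 * m0 * (m2 - m1) * X)
      with ((m0 + m2 - m1) * (m0 + m2 - m1) * X - (m0 + m1 - m2) * (m0 + m1 - m2) * X) by ring.
    rewrite <- Ea, <- Eb.
    replace (m0 * m2 * (m0 * m2) * - cross (vsub d20 d02) (vsub e20 e02))
      with (- (m0 * m0) * (m2 * m2 * cross (vsub d20 d02) (vsub e20 e02))) by ring.
    rewrite Eab. ring. }
  assert (F2 : 4 * m1 * (m2 - m0) * X = 0).
  { replace (4 * m1 * (m2 - m0) * X)
      with ((m1 + m2 - m0) * (m1 + m2 - m0) * X - (m0 + m1 - m2) * (m0 + m1 - m2) * X) by ring.
    rewrite <- Ea, <- Ec.
    replace (m1 * m2 * (m1 * m2) * - cross (vsub d21 d12) (vsub e21 e12))
      with (- (m1 * m1) * (m2 * m2 * cross (vsub d21 d12) (vsub e21 e12))) by ring.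
    rewrite Eac. ring. }
  apply Rmult_integral in F1 as [F1 | F1]; [| exact F1].
  apply Rmult_integral in F2 as [F2 | F2]; [| exact F2].
  exfalso. apply Hne.
  apply Rmult_integral in F1 as [F1 | F1]; [lra |].
  apply Rmult_integral in F2 as [F2 | F2]; lra.
Qed.

Lemma com_difference_rows (x : R -> R * R) (m0 m1 m2 h0 h1 h2 : R) (K : R * R) (u : R) :
  (forall t, vadd (vscale m0 (x (t + h0))) (vadd (vscale m1 (x (t + h1))) (vscale m2 (x (t + h2))))
     = K) ->
  vadd (vscale m1 (vsub (x (u + (h1 - h0))) (x u))) (vscale m2 (vsub (x (u + (h2 - h0))) (x u)))
    = vsub K (vscale (m0 + m1 + m2) (x u)) /\
  vadd (vscale m0 (vsub (x (u + (h0 - h1))) (x u))) (vscale m2 (vsub (x (u + (h2 - h1))) (x u)))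
    = vsub K (vscale (m0 + m1 + m2) (x u)) /\
  vadd (vscale m0 (vsub (x (u + (h0 - h2))) (x u))) (vscale m1 (vsub (x (u + (h1 - h2))) (x u)))
    = vsub K (vscale (m0 + m1 + m2) (x u)).
Proof.
  intro H.
  assert (Hkk : forall k, x (u - k + k) = x u) by (intro; f_equal; ring).
  assert (Hkj : forall k j, x (u - k + j) = x (u + (j - k))) by (intros; f_equal; ring).
  split; [| split];
    [generalize (H (u - h0)) | generalize (H (u - h1)) | generalize (H (u - h2))];
    rewrite Hkk, !Hkj; intros <-; vec_ring.
Qed.

Lemma com_cross_relations (m0 m1 m2 : R) (x0 x1 x2 : R * R) :
  vadd (vscale m0 x0) (vadd (vscale m1 x1) (vscale m2 x2)) = (0, 0) ->
  m2 * cross (vsub x1 x0) (vsub x2 x0) = (m0 + m1 + m2) * cross x0 x1 /\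
  m2 * cross x0 x2 = - (m1 * cross x0 x1).
Proof.
  intro H. pose proof (f_equal fst H) as Hx. pose proof (f_equal snd H) as Hy. vec_unfold_all.
  split.
  - replace (m2 * ((fst x1 - fst x0) * (snd x2 - snd x0) - (snd x1 - snd x0) * (fst x2 - fst x0)))
      with ((fst x1 - fst x0) * (m2 * snd x2) - (snd x1 - snd x0) * (m2 * fst x2)
            - m2 * ((fst x1 - fst x0) * snd x0 - (snd x1 - snd x0) * fst x0)) by ring.
    replace (m2 * snd x2) with (- (m0 * snd x0 + m1 * snd x1)) by lra.
    replace (m2 * fst x2) with (- (m0 * fst x0 + m1 * fst x1)) by lra. ring.
  - replace (m2 * (fst x0 * snd x2 - snd x0 * fst x2))
      with (fst x0 * (m2 * snd x2) - snd x0 * (m2 * fst x2)) by ring.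
    replace (m2 * snd x2) with (- (m0 * snd x0 + m1 * snd x1)) by lra.
    replace (m2 * fst x2) with (- (m0 * fst x0 + m1 * fst x1)) by lra. ring.
Qed.

Lemma torque_free_equal_pulls (f : R -> R) (m0 m1 m2 : R) (x0 x1 x2 : R * R) :
  0 < m0 -> 0 < m1 ->
  vadd (vscale m0 x0) (vadd (vscale m1 x1) (vscale m2 x2)) = (0, 0) ->
  cross x0 (accel_from f m1 x1 m2 x2 x0) = 0 ->
  cross x1 (accel_from f m0 x0 m2 x2 x1) = 0 ->
  cross x0 x1 <> 0 ->
  f (vnorm2 (vsub x2 x0)) = f (vnorm2 (vsub x1 x0)) /\
  f (vnorm2 (vsub x2 x1)) = f (vnorm2 (vsub x1 x0)).
Proof.
  intros H0 H1 Hcom T0 T1 Hk.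
  destruct (com_cross_relations m0 m1 m2 x0 x1 x2 Hcom) as [R12 R02].
  unfold accel_from, force in T0, T1. rewrite (vnorm2_sub_comm x0 x1) in T1.
  revert T0 T1.
  generalize (f (vnorm2 (vsub x1 x0))) (f (vnorm2 (vsub x2 x0))) (f (vnorm2 (vsub x2 x1))).
  intros w01 w02 w12 T0 T1.
  assert (E0 : cross x0
      (vadd (vscale m1 (vscale w01 (vsub x1 x0))) (vscale m2 (vscale w02 (vsub x2 x0))))
    = m1 * cross x0 x1 * (w01 - w02)).
  { transitivity (m1 * w01 * cross x0 x1 + w02 * (m2 * cross x0 x2)); [vec_unfold; ring |].
    rewrite R02. ring. }
  assert (E1 : cross x1
      (vadd (vscale m0 (vscale w01 (vsub x0 x1))) (vscale m2 (vscale w12 (vsub x2 x1))))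
    = m0 * cross x0 x1 * (w12 - w01)).
  { transitivity (- m0 * w01 * cross x0 x1
      + w12 * (m2 * cross (vsub x1 x0) (vsub x2 x0) - m2 * cross x0 x1 + m2 * cross x0 x2));
      [vec_unfold; ring |].
    rewrite R12, R02. ring. }
  rewrite E0 in T0. rewrite E1 in T1.
  apply Rmult_integral in T0 as [T0 | T0]; [apply Rmult_integral in T0 as [T0 | T0]; lra |].
  apply Rmult_integral in T1 as [T1 | T1]; [apply Rmult_integral in T1 as [T1 | T1]; lra |].
  split; lra.
Qed.

Lemma equilateral_weighted_norm (a b r : R) (x y z : R * R) :
  vnorm2 (vsub y x) = r -> vnorm2 (vsub z x) = r -> vnorm2 (vsub z y) = r ->
  vnorm2 (vadd (vscale a (vsub x y)) (vscale b (vsub x z))) = (a * a + b * b + a * b) * r.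
Proof.
  intros Hy Hz Hyz.
  transitivity (a * a * vnorm2 (vsub y x) + b * b * vnorm2 (vsub z x)
    + a * b * (vnorm2 (vsub y x) + vnorm2 (vsub z x) - vnorm2 (vsub z y))); [vec_unfold; ring |].
  rewrite Hy, Hz, Hyz. ring.
Qed.

Lemma com_equilateral_norms (m0 m1 m2 r : R) (x0 x1 x2 : R * R) :
  vadd (vscale m0 x0) (vadd (vscale m1 x1) (vscale m2 x2)) = (0, 0) ->
  vnorm2 (vsub x1 x0) = r -> vnorm2 (vsub x2 x0) = r -> vnorm2 (vsub x2 x1) = r ->
  (m0 + m1 + m2) ^ 2 * vnorm2 x0 = (m1 * m1 + m2 * m2 + m1 * m2) * r /\
  (m0 + m1 + m2) ^ 2 * vnorm2 x1 = (m0 * m0 + m2 * m2 + m0 * m2) * r /\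
  (m0 + m1 + m2) ^ 2 * vnorm2 x2 = (m0 * m0 + m1 * m1 + m0 * m1) * r.
Proof.
  intros Hcom H10 H20 H21.
  assert (H01 : vnorm2 (vsub x0 x1) = r) by (rewrite vnorm2_sub_comm; exact H10).
  assert (H02 : vnorm2 (vsub x0 x2) = r) by (rewrite vnorm2_sub_comm; exact H20).
  assert (H12 : vnorm2 (vsub x1 x2) = r) by (rewrite vnorm2_sub_comm; exact H21).
  rewrite <- !vnorm2_scale. repeat split.
  - replace (vscale (m0 + m1 + m2) x0) with (vadd (vscale m1 (vsub x0 x1)) (vscale m2 (vsub x0 x2)))
      by vec_lra.
    apply equilateral_weighted_norm; assumption.
  - replace (vscale (m0 + m1 + m2) x1) with (vadd (vscale m0 (vsub x1 x0)) (vscale m2 (vsub x1 x2)))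
      by vec_lra.
    apply equilateral_weighted_norm; assumption.
  - replace (vscale (m0 + m1 + m2) x2) with (vadd (vscale m0 (vsub x2 x0)) (vscale m1 (vsub x2 x1)))
      by vec_lra.
    apply equilateral_weighted_norm; assumption.
Qed.

Lemma equilateral_not_collinear (r : R) (x0 x1 x2 : R * R) :
  0 < r -> vnorm2 (vsub x1 x0) = r -> vnorm2 (vsub x2 x0) = r -> vnorm2 (vsub x2 x1) = r ->
  cross (vsub x1 x0) (vsub x2 x0) <> 0.
Proof.
  intros Hr H10 H20 H21 Hc.
  assert (Hd : 2 * vdot (vsub x1 x0) (vsub x2 x0)
    = vnorm2 (vsub x1 x0) + vnorm2 (vsub x2 x0) - vnorm2 (vsub x2 x1)) by (vec_unfold; ring).
  pose proof (vdot_cross_sqr (vsub x1 x0) (vsub x2 x0)) as E.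
  rewrite Hc, H10, H20 in E. rewrite H10, H20, H21 in Hd. nra.
Qed.

(* The hypotheses on [f] enter the proof only through this injectivity. *)
Lemma sqrt_mul_decreasing_inj (f : R -> R) :
  (forall x, 0 < x -> 0 < f x) ->
  (forall x y, 0 < x -> x < y -> sqrt y * f y < sqrt x * f x) ->
  forall x y, 0 < x -> 0 < y -> f x = f y -> x = y.
Proof.
  intros Hpos Hdec.
  assert (Hlt : forall x y, 0 < x -> x < y -> f x <> f y).
  { intros x y Hx Hxy E. pose proof (Hdec x y Hx Hxy) as H. rewrite E in H.
    pose proof (sqrt_lt_1_alt x y (conj (Rlt_le _ _ Hx) Hxy)). pose proof (Hpos y ltac:(lra)).
    nra. }
  intros x y Hx Hy E.
  destruct (Rtotal_order x y) as [Hxy | [Hxy | Hxy]]; [| exact Hxy |]; exfalso.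
  - exact (Hlt x y Hx Hxy E).
  - exact (Hlt y x Hy Hxy (eq_sym E)).
Qed.

(** * Choreographies with an axis of symmetry *)

Section MirrorChoreography.

Variables (f : R -> R) (m0 m1 m2 h0 h1 h2 T s th : R) (c : R * R).
Variables (px py dpx dpy ddpx ddpy : R -> R).

Local Notation p := (curve px py).
Local Notation v := (curve dpx dpy).
Local Notation a := (curve ddpx ddpy).

Hypothesis f_inj : forall x y, 0 < x -> 0 < y -> f x = f y -> x = y.
Hypotheses (m0_pos : 0 < m0) (m1_pos : 0 < m1) (m2_pos : 0 < m2).
Hypotheses
  (px_deriv : forall t, is_derive px t (dpx t)) (py_deriv : forall t, is_derive py t (dpy t))
  (dpx_deriv : forall t, is_derive dpx t (ddpx t)) (dpy_deriv : forall t, is_derive dpy t (ddpy t)).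
Hypotheses (T_pos : 0 < T) (p_periodic : forall t, p (t + T) = p t).
Hypotheses (p01 : forall t, p (t + h0) <> p (t + h1)) (p02 : forall t, p (t + h0) <> p (t + h2))
  (p12 : forall t, p (t + h1) <> p (t + h2)).
Hypotheses
  (motion0 : forall t, a (t + h0) = accel_from f m1 (p (t + h1)) m2 (p (t + h2)) (p (t + h0)))
  (motion1 : forall t, a (t + h1) = accel_from f m0 (p (t + h0)) m2 (p (t + h2)) (p (t + h1)))
  (motion2 : forall t, a (t + h2) = accel_from f m0 (p (t + h0)) m1 (p (t + h1)) (p (t + h2))).
Hypothesis com : forall t,
  vadd (vscale m0 (p (t + h0))) (vadd (vscale m1 (p (t + h1))) (vscale m2 (p (t + h2)))) = (0, 0).
Hypothesis p_mirror : forall t, p (2 * s - t) = reflect_line c th (p t).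

Lemma second_derivative_mirror (u du ddu : R -> R) (c0 cx cy : R) :
  (forall t, is_derive u t (du t)) -> (forall t, is_derive du t (ddu t)) ->
  (forall t, u (2 * s - t) = c0 + cx * px t + cy * py t) ->
  forall t, ddu (2 * s - t) = cx * ddpx t + cy * ddpy t.
Proof.
  intros Du DDu E t.
  assert (E' : forall t, du (2 * s - t) = 0 + (- cx) * dpx t + (- cy) * dpy t).
  { intro t'. pose proof (is_derive_reflected_time px py u dpx dpy du s c0 cx cy
      px_deriv py_deriv Du E t'). lra. }
  pose proof (is_derive_reflected_time dpx dpy du ddpx ddpy ddu s 0 (- cx) (- cy)
    dpx_deriv dpy_deriv DDu E' t).
  lra.
Qed.

Lemma accel_mirror (t : R) : a (2 * s - t) = reflect_lin th (a t).
Proof.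
  assert (Ex : forall t, px (2 * s - t) = fst (reflect_line c th (0, 0))
    + fst (reflect_lin th (1, 0)) * px t + fst (reflect_lin th (0, 1)) * py t).
  { intro t'. change (px (2 * s - t')) with (fst (p (2 * s - t'))). rewrite p_mirror.
    vec_unfold. ring. }
  assert (Ey : forall t, py (2 * s - t) = snd (reflect_line c th (0, 0))
    + snd (reflect_lin th (1, 0)) * px t + snd (reflect_lin th (0, 1)) * py t).
  { intro t'. change (py (2 * s - t')) with (snd (p (2 * s - t'))). rewrite p_mirror.
    vec_unfold. ring. }
  pose proof (second_derivative_mirror px dpx ddpx _ _ _ px_deriv dpx_deriv Ex t) as Hx.
  pose proof (second_derivative_mirror py dpy ddpy _ _ _ py_deriv dpy_deriv Ey t) as Hy.
  apply injective_projections; vec_unfold_all; [rewrite Hx | rewrite Hy]; ring.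
Qed.

Lemma p_mirror_shift (t b : R) : p (2 * s - t + b) = reflect_line c th (p (t - b)).
Proof. rewrite <- p_mirror. f_equal. ring. Qed.

(* The mirror image of the motion, run backwards in time, is again a motion. *)
Lemma accel_reversal (w1 w2 b1 b2 : R) :
  (forall t, a t = accel_from f w1 (p (t + b1)) w2 (p (t + b2)) (p t)) ->
  forall t, a t = accel_from f w1 (p (t - b1)) w2 (p (t - b2)) (p t).
Proof.
  intros H t. apply (reflect_lin_inj th).
  rewrite <- accel_mirror, H, !p_mirror_shift, p_mirror, accel_from_reflect_line.
  reflexivity.
Qed.

Lemma com_reversal : exists K, forall t,
  vadd (vscale m0 (p (t - h0))) (vadd (vscale m1 (p (t - h1))) (vscale m2 (p (t - h2)))) = K.
Proof.
  eexists. intro t. apply (com_reflect_line c th).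
  rewrite <- !p_mirror_shift. apply com.
Qed.

Lemma motion_rows (u : R) :
  a u = accel_from f m1 (p (u + (h1 - h0))) m2 (p (u + (h2 - h0))) (p u) /\
  a u = accel_from f m0 (p (u + (h0 - h1))) m2 (p (u + (h2 - h1))) (p u) /\
  a u = accel_from f m0 (p (u + (h0 - h2))) m1 (p (u + (h1 - h2))) (p u).
Proof.
  assert (Hkk : forall k, u - k + k = u) by (intro; ring).
  assert (Hkj : forall k j, u - k + j = u + (j - k)) by (intros; ring).
  split; [| split];
    [generalize (motion0 (u - h0)) | generalize (motion1 (u - h1)) | generalize (motion2 (u - h2))];
    rewrite !Hkk, !Hkj; trivial.
Qed.

Lemma central_accel : ~ (m0 = m1 /\ m1 = m2) -> forall u, cross (p u) (a u) = 0.
Proof.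
  intros Hne u.
  destruct com_reversal as [K HK].
  destruct (com_difference_rows p m0 m1 m2 h0 h1 h2 (0, 0) u com) as (C0 & C1 & C2).
  destruct (com_difference_rows p m0 m1 m2 (- h0) (- h1) (- h2) K u HK) as (C0' & C1' & C2').
  destruct (motion_rows u) as (M0 & M1 & M2).
  pose proof (accel_reversal _ _ _ _ (fun t => proj1 (motion_rows t)) u) as M0'.
  pose proof (accel_reversal _ _ _ _ (fun t => proj1 (proj2 (motion_rows t))) u) as M1'.
  pose proof (accel_reversal _ _ _ _ (fun t => proj2 (proj2 (motion_rows t))) u) as M2'.
  assert (Hopp : forall j k, u + (- j - - k) = u + (k - j)) by (intros; ring).
  assert (Hrev : forall j k, u - (j - k) = u + (k - j)) by (intros; ring).
  rewrite !Hopp in C0', C1', C2'. rewrite !Hrev in M0', M1', M2'.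
  pose (d b := vsub (p (u + b)) (p u)).
  assert (Hc : cross (vsub (0, 0) (vscale (m0 + m1 + m2) (p u))) (a u) = 0).
  { apply (pair_system_cross m0 m1 m2 _ K _ (0, 0)
      (d (h1 - h0)) (d (h0 - h1)) (d (h2 - h0)) (d (h0 - h2)) (d (h2 - h1)) (d (h1 - h2))
      (force f (d (h1 - h0))) (force f (d (h0 - h1))) (force f (d (h2 - h0)))
      (force f (d (h0 - h2))) (force f (d (h2 - h1))) (force f (d (h1 - h2))));
      try apply cross_force; try assumption; unfold pair_system, d; cbv beta.
    - replace (vadd (vsub (0, 0) (vscale (m0 + m1 + m2) (p u))) K)
        with (vsub K (vscale (m0 + m1 + m2) (p u))) by vec_ring.
      repeat split; assumption.
    - replace (vadd (a u) (0, 0)) with (a u) by vec_ring.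
      repeat split; symmetry; assumption. }
  replace (cross (vsub (0, 0) (vscale (m0 + m1 + m2) (p u))) (a u))
    with (- (m0 + m1 + m2) * cross (p u) (a u)) in Hc by (vec_unfold; ring).
  apply Rmult_integral in Hc as [Hc | Hc]; [lra | exact Hc].
Qed.

Section CentralForces.

Hypothesis central : forall u, cross (p u) (a u) = 0.

Lemma equilateral_of_not_collinear (t : R) :
  cross (p (t + h0)) (p (t + h1)) <> 0 ->
  vnorm2 (vsub (p (t + h2)) (p (t + h0))) = vnorm2 (vsub (p (t + h1)) (p (t + h0))) /\
  vnorm2 (vsub (p (t + h2)) (p (t + h1))) = vnorm2 (vsub (p (t + h1)) (p (t + h0))).
Proof.
  intro Hk.
  destruct (torque_free_equal_pulls f m0 m1 m2 _ _ _ m0_pos m1_pos (com t)) as [F1 F2];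
    [rewrite <- motion0; apply central | rewrite <- motion1; apply central | exact Hk |].
  assert (P10 := vnorm2_sub_pos _ _ (not_eq_sym (p01 t))).
  assert (P20 := vnorm2_sub_pos _ _ (not_eq_sym (p02 t))).
  assert (P21 := vnorm2_sub_pos _ _ (not_eq_sym (p12 t))).
  split; apply f_inj; assumption.
Qed.

Lemma masses_equal_of_never_collinear :
  (forall t, cross (p (t + h0)) (p (t + h1)) <> 0) -> m0 = m1 /\ m1 = m2.
Proof.
  intro Hnc.
  set (M := m0 + m1 + m2).
  set (c0 := m1 * m1 + m2 * m2 + m1 * m2).
  set (c1 := m0 * m0 + m2 * m2 + m0 * m2).
  set (c2 := m0 * m0 + m1 * m1 + m0 * m1).
  set (rho t := vnorm2 (vsub (p (t + h1)) (p (t + h0)))).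
  set (r u := vnorm2 (p u)).
  assert (Hnorms : forall t, M ^ 2 * r (t + h0) = c0 * rho t /\ M ^ 2 * r (t + h1) = c1 * rho t /\
    M ^ 2 * r (t + h2) = c2 * rho t).
  { intro t. destruct (equilateral_of_not_collinear t (Hnc t)) as [E20 E21].
    apply com_equilateral_norms; [apply com | reflexivity | exact E20 | exact E21]. }
  assert (rho_pos : forall t, 0 < rho t) by (intro t; apply vnorm2_sub_pos, not_eq_sym, p01).
  assert (HM : 0 < M ^ 2) by (apply pow_lt; unfold M; lra).
  assert (r_pos : forall u, 0 < r u).
  { intro u. replace u with (u - h0 + h0) by ring.
    destruct (Hnorms (u - h0)) as [E _]. pose proof (rho_pos (u - h0)).
    assert (0 < c0) by (unfold c0; nra). nra. }
  assert (r_cont : continuity r).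
  { apply continuity_of_ex_derive. intro t. unfold r. vec_unfold. auto_derive. ex_derive_hyps. }
  assert (r_per : forall t, r (t + T) = r t)
    by (intro t; unfold r; rewrite p_periodic; reflexivity).
  assert (Hratio : forall hk ck, 0 < ck -> (forall t, M ^ 2 * r (t + hk) = ck * rho t) -> ck = c0).
  { intros hk ck Hck Hk. apply (periodic_scaling_eq r T ck c0 h0 hk); auto; [unfold c0; nra |].
    intro t. apply (Rmult_eq_reg_l (M ^ 2)); [| lra].
    transitivity (ck * (M ^ 2 * r (t + h0))); [ring |].
    transitivity (c0 * (M ^ 2 * r (t + hk))); [rewrite (proj1 (Hnorms t)), Hk; ring | ring]. }
  assert (E10 : c1 = c0) by (apply (Hratio h1); [unfold c1; nra | apply Hnorms]).
  assert (E20 : c2 = c0) by (apply (Hratio h2); [unfold c2; nra | apply Hnorms]).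
  assert (F1 : (m0 - m1) * M = 0) by (transitivity (c1 - c0); [unfold c0, c1, M; ring | lra]).
  assert (F2 : (m0 - m2) * M = 0) by (transitivity (c2 - c0); [unfold c0, c2, M; ring | lra]).
  apply Rmult_integral in F1 as [F1 | F1]; [| unfold M in F1; lra].
  apply Rmult_integral in F2 as [F2 | F2]; [| unfold M in F2; lra].
  split; lra.
Qed.

Lemma collinear_everywhere (t0 : R) :
  cross (p (t0 + h0)) (p (t0 + h1)) = 0 -> forall t, cross (p (t + h0)) (p (t + h1)) = 0.
Proof.
  intros H0 t.
  set (n j k t' := vnorm2 (vsub (p (t' + j)) (p (t' + k)))).
  apply (zero_everywhere_of_exclusive (fun t' => cross (p (t' + h0)) (p (t' + h1)))
    (fun t' => (n h2 h0 t' - n h1 h0 t') * (n h2 h0 t' - n h1 h0 t')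
             + (n h2 h1 t' - n h1 h0 t') * (n h2 h1 t' - n h1 h0 t')) t0); [| | | | exact H0].
  - apply continuity_of_ex_derive. intro t'. vec_unfold. auto_derive. ex_derive_hyps.
  - apply continuity_of_ex_derive. intro t'. unfold n. vec_unfold. auto_derive. ex_derive_hyps.
  - intro t'. destruct (Req_dec (cross (p (t' + h0)) (p (t' + h1))) 0) as [E | E];
      [left; exact E | right].
    destruct (equilateral_of_not_collinear t' E) as [E20 E21].
    unfold n. rewrite E20, E21. ring.
  - intros t' Hk Hn. apply Rplus_sqr_eq_0 in Hn as [E20 E21].
    apply Rminus_diag_uniq in E20, E21.
    destruct (com_cross_relations m0 m1 m2 _ _ _ (com t')) as [R12 _].
    rewrite Hk, Rmult_0_r in R12.
    apply (equilateral_not_collinear (n h1 h0 t') (p (t' + h0)) (p (t' + h1)) (p (t' + h2)));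
      [apply vnorm2_sub_pos, not_eq_sym, p01 | reflexivity | exact E20 | exact E21 |].
    apply Rmult_integral in R12 as [R12 | R12]; [lra | exact R12].
Qed.

Lemma collinear_avoids_origin :
  (forall t, cross (p (t + h0)) (p (t + h1)) = 0) -> forall u, p u <> (0, 0).
Proof.
  intros Hcol u Hu.
  set (g t := vdot (vsub (p (t + h1)) (p (t + h0))) (vsub (p (t + h2)) (p (t + h0)))).
  destruct (IVT_unordered g (u - h0) (u - h1)) as [z Hz].
  - apply continuity_of_ex_derive. intro t. unfold g. vec_unfold. auto_derive. ex_derive_hyps.
  - unfold g. pose proof (com (u - h0)) as C. pose proof (p02 (u - h0)) as N.
    replace (u - h0 + h0) with u in C, N |- * by ring. rewrite Hu in C, N |- *.
    replace (vsub (p (u - h0 + h1)) (0, 0)) with (p (u - h0 + h1)) by vec_ring.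
    replace (vsub (p (u - h0 + h2)) (0, 0)) with (p (u - h0 + h2)) by vec_ring.
    apply (opposite_vdot_neg m1 m2); [assumption | assumption | | auto].
    rewrite <- C. vec_ring.
  - unfold g. pose proof (com (u - h1)) as C. pose proof (p12 (u - h1)) as N.
    replace (u - h1 + h1) with u in C, N |- * by ring. rewrite Hu in C, N |- *.
    assert (D := opposite_vdot_neg m0 m2 (p (u - h1 + h0)) (p (u - h1 + h2)) m0_pos m2_pos).
    pose proof (vnorm2_pos _ (not_eq_sym N)) as Hn2.
    assert (Hd : vdot (p (u - h1 + h0)) (p (u - h1 + h2)) < 0).
    { apply D; [rewrite <- C; vec_ring | auto]. }
    assert (Hn0 : 0 <= vnorm2 (p (u - h1 + h0))) by (vec_unfold; nra).
    replace (vdot (vsub (0, 0) (p (u - h1 + h0))) (vsub (p (u - h1 + h2)) (p (u - h1 + h0))))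
      with (vnorm2 (p (u - h1 + h0)) - vdot (p (u - h1 + h0)) (p (u - h1 + h2)))
      by (vec_unfold; ring).
    lra.
  - destruct (com_cross_relations m0 m1 m2 _ _ _ (com z)) as [R12 _].
    rewrite Hcol, Rmult_0_r in R12.
    apply (vdot_neq0_of_parallel (vsub (p (z + h1)) (p (z + h0))) (vsub (p (z + h2)) (p (z + h0))));
      [apply vsub_neq_0, not_eq_sym, p01 | apply vsub_neq_0, not_eq_sym, p02 | | exact Hz].
    apply Rmult_integral in R12 as [R12 | R12]; [lra | exact R12].
Qed.

Lemma angular_momentum_const (u w : R) : cross (p u) (v u) = cross (p w) (v w).
Proof.
  apply (is_derive_zero_const (fun u => cross (p u) (v u))). intro t.
  rewrite <- (central t). vec_unfold. auto_derive; ex_derive_hyps; rewrite_derive_hyps; ring.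
Qed.

Lemma collinear_rotating_absurd :
  (forall t, cross (p (t + h0)) (p (t + h1)) = 0) -> cross (p 0) (v 0) <> 0 -> False.
Proof.
  intros Hcol HL.
  assert (Hcol2 : forall t, cross (p (t + h0)) (p (t + h2)) = 0).
  { intro t. destruct (com_cross_relations m0 m1 m2 _ _ _ (com t)) as [_ R02].
    rewrite Hcol, Rmult_0_r, Ropp_0 in R02.
    apply Rmult_integral in R02 as [R02 | R02]; lra. }
  assert (Hd : forall b b', (forall t, cross (p (t + b)) (p (t + b')) = 0) ->
    cross (v (0 + b)) (p (0 + b')) + cross (p (0 + b)) (v (0 + b')) = 0).
  { intros b b' Hz.
    apply (is_derive_ext_eq (fun t => cross (p (t + b)) (p (t + b'))) (fun _ => 0) 0);
      [exact Hz | | auto_derive; reflexivity].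
    vec_unfold. auto_derive; ex_derive_hyps; rewrite_derive_hyps; ring. }
  assert (Hp0 := collinear_avoids_origin Hcol (0 + h0)).
  rewrite (angular_momentum_const 0 (0 + h0)) in HL.
  destruct (parallel_same_momentum _ _ _ _ _ Hp0 (Hcol 0) (Hd _ _ Hcol) eq_refl
    (angular_momentum_const _ _) HL) as [E1 | E1]; [exact (p01 0 (eq_sym E1)) |].
  destruct (parallel_same_momentum _ _ _ _ _ Hp0 (Hcol2 0) (Hd _ _ Hcol2) eq_refl
    (angular_momentum_const _ _) HL) as [E2 | E2]; [exact (p02 0 (eq_sym E2)) |].
  apply (p12 0). rewrite E1, E2. reflexivity.
Qed.

Lemma radial_of_zero_momentum :
  (forall u, p u <> (0, 0)) -> cross (p 0) (v 0) = 0 -> forall u, cross (p 0) (p u) = 0.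
Proof.
  intros Hnz HL u. set (e := p 0).
  assert (Hz : cross e (p u) * cross e (p u) / vnorm2 (p u) = cross e e * cross e e / vnorm2 e).
  { apply (is_derive_zero_const (fun u => cross e (p u) * cross e (p u) / vnorm2 (p u))).
    intro t. pose proof (vnorm2_pos _ (Hnz t)) as Ht.
    assert (Lt : cross (p t) (v t) = 0) by (rewrite (angular_momentum_const t 0); exact HL).
    revert Ht Lt. unfold e. vec_unfold. intros Ht Lt.
    assert (Hn : px t * px t + py t * py t <> 0) by (apply Rgt_not_eq, Ht).
    auto_derive; ex_derive_hyps; [exact Hn | rewrite_derive_hyps].
    (* The derivative is [2 (e x p) (e . p) (p x p') / |p|^4]. *)
    transitivity (2 * (px 0 * py t - py 0 * px t) * (px 0 * px t + py 0 * py t)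
      * (px t * dpy t - py t * dpx t) / (px t * px t + py t * py t) ^ 2);
      [field; exact Hn | rewrite Lt; field; exact Hn]. }
  assert (Hee : cross e e = 0) by (unfold cross; ring).
  unfold Rdiv in Hz. rewrite Hee, !Rmult_0_l in Hz.
  pose proof (Rinv_neq_0_compat _ (Rgt_not_eq _ _ (vnorm2_pos _ (Hnz u)))) as Hinv.
  apply Rmult_integral in Hz as [Hz | Hz]; [| contradiction].
  apply Rmult_integral in Hz as [Hz | Hz]; exact Hz.
Qed.

Lemma collinear_radial_absurd :
  (forall t, cross (p (t + h0)) (p (t + h1)) = 0) -> cross (p 0) (v 0) = 0 -> False.
Proof.
  intros Hcol HL.
  pose proof (collinear_avoids_origin Hcol) as Hnz.
  pose proof (radial_of_zero_momentum Hnz HL) as Hrad.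
  set (w u := vdot (p 0) (p u)).
  assert (w_pos : forall u, 0 < w u).
  { apply (continuity_pos_everywhere w 0).
    - apply continuity_of_ex_derive. intro t. unfold w. vec_unfold. auto_derive. ex_derive_hyps.
    - intro t. apply vdot_neq0_of_parallel; [apply Hnz | apply Hnz | apply Hrad].
    - apply vnorm2_pos, Hnz. }
  assert (E : vdot (p 0) (vadd (vscale m0 (p (0 + h0)))
      (vadd (vscale m1 (p (0 + h1))) (vscale m2 (p (0 + h2)))))
    = m0 * w (0 + h0) + m1 * w (0 + h1) + m2 * w (0 + h2)) by (unfold w; vec_unfold; ring).
  rewrite com in E. replace (vdot (p 0) (0, 0)) with 0 in E by (vec_unfold; ring).
  pose proof (Rmult_lt_0_compat _ _ m0_pos (w_pos (0 + h0))).
  pose proof (Rmult_lt_0_compat _ _ m1_pos (w_pos (0 + h1))).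
  pose proof (Rmult_lt_0_compat _ _ m2_pos (w_pos (0 + h2))).
  lra.
Qed.

End CentralForces.

Theorem masses_equal : m0 = m1 /\ m1 = m2.
Proof.
  destruct (classic (m0 = m1 /\ m1 = m2)) as [Heq | Hne]; [exact Heq | exfalso].
  pose proof (central_accel Hne) as Hc.
  destruct (classic (exists t, cross (p (t + h0)) (p (t + h1)) = 0)) as [[t0 H0] | Hnc].
  - pose proof (collinear_everywhere Hc t0 H0) as Hcol.
    destruct (Req_dec (cross (p 0) (v 0)) 0) as [HL | HL].
    + exact (collinear_radial_absurd Hc Hcol HL).
    + exact (collinear_rotating_absurd Hc Hcol HL).
  - apply Hne, (masses_equal_of_never_collinear Hc).
    intros t Ht. apply Hnc. exists t. exact Ht.
Qed.

End MirrorChoreography.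

Lemma curve_fst_snd (P : R -> R * R) (t : R) :
  curve (fun t => fst (P t)) (fun t => snd (P t)) t = P t.
Proof. unfold curve. destruct (P t). reflexivity. Qed.

Lemma acc_shift (Q P : R -> R * R) (dx dy ddx ddy : R -> R) (b t : R) :
  (forall t, is_derive (fun t => fst (P t)) t (dx t)) -> (forall t, is_derive dx t (ddx t)) ->
  (forall t, is_derive (fun t => snd (P t)) t (dy t)) -> (forall t, is_derive dy t (ddy t)) ->
  (forall t, Q t = P (t + b)) -> acc Q t = curve ddx ddy (t + b).
Proof.
  intros Dx DDx Dy DDy HQ.
  assert (D2 : forall (g dg ddg : R -> R), (forall t, is_derive g t (dg t)) ->
    (forall t, is_derive dg t (ddg t)) -> Derive_n (fun t => g (t + b)) 2 t = ddg (t + b)).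
  { intros g dg ddg Dg DDg. rewrite Derive_n_comp_trans.
    apply is_derive_n_unique. simpl.
    apply (is_derive_ext dg); [| apply DDg].
    intro x. symmetry. apply is_derive_unique, Dg. }
  unfold acc, curve. f_equal.
  - rewrite <- (D2 _ _ _ Dx DDx). apply Derive_n_ext. intro x. rewrite HQ. reflexivity.
  - rewrite <- (D2 _ _ _ Dy DDy). apply Derive_n_ext. intro x. rewrite HQ. reflexivity.
Qed.

Lemma rhs_accel_from (f : R -> R) (m : nat -> R) (q : nat -> R -> R * R) (t : R) :
  rhs f m q 0 t = accel_from f (m 1%nat) (q 1%nat t) (m 2%nat) (q 2%nat t) (q 0%nat t) /\
  rhs f m q 1 t = accel_from f (m 0%nat) (q 0%nat t) (m 2%nat) (q 2%nat t) (q 1%nat t) /\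
  rhs f m q 2 t = accel_from f (m 0%nat) (q 0%nat t) (m 1%nat) (q 1%nat t) (q 2%nat t).
Proof. unfold rhs, force_term. simpl. repeat split; vec_ring. Qed.

Lemma symmetry_axis_reflection (P : R -> R * R) :
  has_symmetry_axis P -> exists c th s, forall t, P (2 * s - t) = reflect_line c th (P t).
Proof.
  intros (c & th & s & H). exists c, th, s. intro t.
  replace (2 * s - t) with (s - (t - s)) by ring.
  rewrite H. f_equal. f_equal. ring.
Qed.

Theorem theorem2 (f : R -> R) (m : nat -> R) (q : nat -> R -> R * R) :
  (forall x, 0 < x -> 0 < f x) ->
  (forall x y, 0 < x -> x < y -> sqrt y * f y < sqrt x * f x) ->
  (forall k, (k < 3)%nat -> 0 < m k) ->
  is_solution f m q ->
  center_of_mass_zero m q ->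
  (exists p, choreography_curve q p /\ has_symmetry_axis p) ->
  m 0%nat = m 1%nat /\ m 1%nat = m 2%nat.
Proof.
  intros Hpos Hdec Hm [Hdist [_ Hacc]] Hcom
    [P [[[[dx [ddx [Dx [DDx _]]]] [dy [ddy [Dy [DDy _]]]]] [[T [HT Hper]] [h Hh]]] Hsym]].
  destruct (symmetry_axis_reflection P Hsym) as (c & th & s & Hmirror).
  assert (Hmotion : forall k t, (k < 3)%nat -> curve ddx ddy (t + h k) = rhs f m q k t).
  { intros k t Hk. rewrite <- (Hacc k t Hk). symmetry. apply (acc_shift _ P dx dy); auto. }
  apply (masses_equal f (m 0%nat) (m 1%nat) (m 2%nat) (h 0%nat) (h 1%nat) (h 2%nat) T s th c
    (fun t => fst (P t)) (fun t => snd (P t)) dx dy ddx ddy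
    (sqrt_mul_decreasing_inj f Hpos Hdec)); try (apply Hm; lia); auto.
  all: intro t; rewrite ?curve_fst_snd, <- ?Hh, ?Hmotion by lia.
  all: destruct (rhs_accel_from f m q t) as (R0 & R1 & R2).
  - apply Hper.
  - apply Hdist; lia.
  - apply Hdist; lia.
  - apply Hdist; lia.
  - exact R0.
  - exact R1.
  - exact R2.
  - apply Hcom.
  - apply Hmirror.
Qed.
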